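(* Let $\beta,p,n$ be positive integers and $\mathcal{S}=\mathcal{S}_n(\beta,p)$. If $G_1,\ldots,G_M$ are pairwise disjoint $\mathcal{S}$-good subsets of $V_n$, then there exists a $(1,\beta,p)$-constrained code on $n$ cells of size $M$. In particular, if $G$ is an $\mathcal{S}$-good $(n,k)$ binary linear code, then there exists a $(1,\beta,p)$-constrained code with rate $\frac{n-k}{n}$.
   Context: $V_n=\{0,1\}^n$ with componentwise addition mod 2. A binary vector is $(\beta,p)$-window-weight-limited if every $\beta$ consecutive entries contain at most $p$ ones; $\mathcal{S}_n(\beta,p)$ is the set of such vectors of length $n$. For $B_1,B_2\subseteq V_n$, $B_1+B_2=\{\mathbf{b}_1+\mathbf{b}_2:\mathbf{b}_1\in B_1,\mathbf{b}_2\in B_2\}$. A subset $B\subseteq V_n$ is $\mathcal{S}$-good if $\mathcal{S}+B=V_n$. An $(n,k)$ linear code is a $k$-dimensional subspace of $V_n$. A code on $n$ binary cells consists, for each write $i\ge1$, of an encoder $\mathcal{E}_i:\{1,\ldots,M_i\}\times\{0,1\}^n\to\{0,1\}^n$ and decoder $\mathcal{D}_i:\{0,1\}^n\to\{1,\ldots,M_i\}$ with $\mathcal{D}_i(\mathcal{E}_i(m,\mathbf{u}))=m$ (the decoder sees only the new state); it has size $M$ if $M_i=M$ for all $i$, in which case its rate is $\frac{\log_2M}{n}$. Starting from the zero state, messages produce states $\mathbf{v}_i=\mathcal{E}_i(m_i,\mathbf{v}_{i-1})$; the code is $(1,\beta,p)$-constrained if for every message sequence and every $i\ge0$, $\mathbf{v}_i+\mathbf{v}_{i+1}$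 has at most $p$ ones in every $\beta$ consecutive positions. *)

From HB Require Import structures.
From mathcomp Require Import all_boot all_order all_algebra.
From Stdlib Require Rdefinitions Raxioms Rpower.
Set Implicit Arguments. Unset Strict Implicit. Unset Printing Implicit Defensive.
Import GRing.Theory.
Local Open Scope ring_scope.

Definition Vn (n : nat) := 'rV['F_2]_n.

Definition wwl (n beta p : nat) (x : Vn n) : bool :=
  [forall s : 'I_n.+1, ((val s + beta <= n)%N) ==>
     (#|[set j : 'I_n | (val s <= val j < val s + beta)%N && (x ord0 j == 1%R)]| <= p)%N].

Definition Sset (n beta p : nat) : {set Vn n} := [set x | wwl beta p x].

Definition sumset (n : nat) (B1 B2 : {set Vn n}) : {set Vn n} :=
  [set b1 + b2 | b1 in B1, b2 in B2].

Definition good (n : nat) (S B : {set Vn n}) : Prop := sumset S B = [set: Vn n].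

(* A code of size M on n binary cells: for each write i >= 1 an encoder
   E_i : messages x states -> states and a decoder D_i : states -> messages
   with D_i (E_i m u) = m.  Messages {1..M} are represented by 'I_M.
   The values at index i = 0 are irrelevant. *)
Record code (n M : nat) := Code {
  enc : nat -> 'I_M -> Vn n -> Vn n;
  dec : nat -> Vn n -> 'I_M;
  dec_enc : forall i m u, (1 <= i)%N -> dec i (enc i m u) = m }.

(* States v_0 = 0, v_i = E_i(m_i, v_{i-1}) for a message sequence ms
   (ms i = m_i for i >= 1; ms 0 unused). *)
Fixpoint state (n M : nat) (C : code n M) (ms : nat -> 'I_M) (i : nat) : Vn n :=
  match i with
  | 0 => 0
  | i'.+1 => enc C i'.+1 (ms i'.+1) (state C ms i')
  end.

Definition constrained (n M beta p : nat) (C : code n M) : Prop :=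
  forall (ms : nat -> 'I_M) (i : nat),
    state C ms i + state C ms i.+1 \in Sset n beta p.

Definition code_rate (n M : nat) : Rdefinitions.R :=
  Rdefinitions.Rdiv
    (Rdefinitions.Rdiv (Rpower.ln (Raxioms.INR M)) (Rpower.ln (Raxioms.INR 2)))
    (Raxioms.INR n).

From HB Require Import structures.
From mathcomp Require Import all_boot all_order all_algebra finfield.
From Stdlib Require Rdefinitions Raxioms Rpower.
From Stdlib Require Reals Lra.
Set Implicit Arguments. Unset Strict Implicit. Unset Printing Implicit Defensive.
Import GRing.Theory.
Local Open Scope ring_scope.

(* Write the current state u as s + g with s in S and g in the good set
   attached to the message; the next state is g.  Since u + g = s over F_2,
   consecutive states differ by a vector of S, and the message is recovered
   as the index of the (unique, by disjointness) good set containing g.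
   For a good linear code G, the cosets of G by a complement W are pairwise
   disjoint and good, giving 2^(n-k) messages. *)

Lemma addrr_Vn n (x : Vn n) : x + x = 0.
Proof. by apply/rowP => j; rewrite !mxE addrr_pchar2 // pchar_Fp. Qed.

Lemma good_decomposition n (S B : {set Vn n}) (u : Vn n) :
  good S B -> exists2 g, g \in B & u + g \in S.
Proof.
move=> gB; have : u \in sumset S B by rewrite gB in_setT.
case/imset2P=> s g Ss Bg ->; exists g => //.
by rewrite -addrA addrr_Vn addr0.
Qed.

Lemma good_translate n (S B : {set Vn n}) (w : Vn n) :
  good S B -> good S [set x | x - w \in B].
Proof.
move=> gB; apply/setP=> x; rewrite in_setT.
have : x - w \in sumset S B by rewrite gB in_setT.
case/imset2P=> s b Ss Bb xw; apply/imset2P; exists s (b + w) => //.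
  by rewrite inE addrK.
by rewrite addrA -xw subrK.
Qed.

Section CodeFromGoodSets.

Variables (n beta p M : nat) (G : 'I_M -> {set Vn n}).
Hypothesis M_gt0 : (0 < M)%N.
Hypothesis G_disjoint : forall i j : 'I_M, i != j -> [disjoint G i & G j].
Hypothesis G_good : forall i : 'I_M, good (Sset n beta p) (G i).

Definition good_enc (i : nat) (m : 'I_M) (u : Vn n) : Vn n :=
  odflt u [pick g in G m | u + g \in Sset n beta p].

Definition good_dec (i : nat) (v : Vn n) : 'I_M :=
  odflt (Ordinal M_gt0) [pick m | v \in G m].

Lemma good_encP i m u :
  good_enc i m u \in G m /\ u + good_enc i m u \in Sset n beta p.
Proof.
rewrite /good_enc; case: pickP => [g /andP[]//|no_g].
have [g Gg uSg] := good_decomposition u (G_good m).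
by have := no_g g; rewrite /= Gg uSg.
Qed.

Lemma good_decK i m u : (1 <= i)%N -> good_dec i (good_enc i m u) = m.
Proof.
move=> _; have Genc := (good_encP i m u).1.
rewrite /good_dec; case: pickP => [m' Gm'|no_m] /=; last by rewrite no_m in Genc.
apply/eqP/negPn/negP => neq.
by rewrite (disjointFr (G_disjoint neq) Gm') in Genc.
Qed.

Definition good_code : code n M := Code good_decK.

Lemma good_code_constrained : constrained beta p good_code.
Proof. by move=> ms i; exact: (good_encP _ _ _).2. Qed.

End CodeFromGoodSets.

Lemma vspace_cosets_disjoint n (G W : {vspace Vn n}) (u v : Vn n) :
  (G :&: W = 0)%VS -> u \in W -> v \in W -> u != v ->
  [disjoint [set x | x - u \in G] & [set x | x - v \in G]].
Proof.
move=> GW0 Wu Wv neq; apply/pred0P => x /=; rewrite !inE.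
apply/negP=> /andP[Gxu Gxv]; move/negP: neq; apply.
have : v - u \in (G :&: W)%VS.
  rewrite memv_cap [_ \in W]rpredB // andbT.
  have -> : v - u = (x - u) - (x - v) by rewrite opprB [RHS]addrC addrA subrK.
  exact: rpredB.
by rewrite GW0 memv0 subr_eq0 eq_sym => ->.
Qed.

Lemma card_vspace_compl n (G : {vspace Vn n}) :
  #|[set v : Vn n | v \in (G^C)%VS]| = (2 ^ (n - \dim G))%N.
Proof. by rewrite cardsE card_vspace card_Fp // dimv_compl dimvf /dim /= mul1n. Qed.

Section Rate.
Import Stdlib.Reals.Reals Stdlib.micromega.Lra.

Lemma code_rate_exp2 (n m : nat) :
  leq 1 n -> code_rate n (expn 2 m) = (INR m / INR n)%R.
Proof.
rewrite /code_rate => n_gt0.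
have n_neq0 : INR n <> 0%R by apply: not_0_INR; case: n n_gt0.
have -> : INR (expn 2 m) = (2 ^ m)%R.
  by elim: m => [|m IH]; rewrite ?expnS ?mult_INR ?IH /=; lra.
have ln2_gt0 : (0 < ln 2)%R by rewrite -ln_1; apply: ln_increasing; lra.
rewrite ln_pow; last lra.
have -> : INR 2 = 2%R by rewrite /=; lra.
by rewrite /Rdiv; field; split; lra.
Qed.

End Rate.

Theorem lemma5 (beta p n : nat) (hbeta : (0 < beta)%N) (hp : (0 < p)%N)
    (hn : (0 < n)%N) :
  (forall (M : nat) (G : 'I_M -> {set Vn n}),
      (0 < M)%N ->
      (forall i j : 'I_M, i != j -> [disjoint G i & G j]) ->
      (forall i : 'I_M, good (Sset n beta p) (G i)) ->
      exists C : code n M, constrained beta p C)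
  /\
  (forall (k : nat) (G : {vspace Vn n}),
      \dim G = k ->
      good (Sset n beta p) [set v : Vn n | v \in G] ->
      exists (M : nat) (C : code n M),
        constrained beta p C /\
        code_rate n M = Rdefinitions.Rdiv (Raxioms.INR (n - k)) (Raxioms.INR n)).
Proof.
split=> [M G M_gt0 G_disj G_good | k G dimG G_good].
  by exists (good_code M_gt0 G_disj G_good); exact: good_code_constrained.
pose W := [set v : Vn n | v \in (G^C)%VS].
have cardW : #|W| = (2 ^ (n - k))%N by rewrite card_vspace_compl dimG.
have W_gt0 : (0 < #|W|)%N by rewrite cardW expn_gt0.
pose coset (i : 'I_#|W|) := [set x : Vn n | x - enum_val i \in G].
have coset_disj i j : i != j -> [disjoint coset i & coset j].
  move=> neq; have := enum_valP i; have := enum_valP j; rewrite !inE => Wj Wi.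
  apply: vspace_cosets_disjoint (capv_compl G) Wi Wj _.
  by apply: contra neq => /eqP/enum_val_inj ->.
have coset_good i : good (Sset n beta p) (coset i).
  rewrite (_ : coset i = [set x | x - enum_val i \in [set v | v \in G]]).
    exact: good_translate.
  by apply/setP=> x; rewrite !inE.
exists #|W|, (good_code W_gt0 coset_disj coset_good); split.
  exact: good_code_constrained.
by rewrite cardW code_rate_exp2.
Qed.
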